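(* Let $k$ be a field, $t\ge1$, $n_1,\dots,n_t\ge1$ and $a_1,\dots,a_t\ge1$ integers with $d=\sum_{s=1}^ta_s\ge2$. Let $K^{d(\mathbf a)}_{\mathbf n}$ be the $d(a_1,\dots,a_t)$-complete multipartite hypergraph. Then $R/I(K^{d(\mathbf a)}_{\mathbf n})$ has a linear resolution, and for $i\ge1$, $\beta_{i,j}(K^{d(\mathbf a)}_{\mathbf n})\ne0$ only if $j=i+(d-1)$.
   Context: $K^{d(\mathbf a)}_{\mathbf n}$ is the hypergraph on the disjoint union $B_1\sqcup\cdots\sqcup B_t$ ($|B_s|=n_s$) whose edges are all subsets $E$ with $|E\cap B_s|=a_s$ for every $s$. $R$ is the polynomial ring over $k$ with one variable per vertex; $I(\mathcal H)$ is generated by $\prod_{v\in E}x_v$, $E$ an edge; $\beta_{i,j}=\dim_k\mathrm{Tor}^R_i(R/I(\mathcal H),k)_j$. $R/I$ has a linear resolution if there is $c$ with $\beta_{i,j}=0$ for all $i\ge1$, $j\ne i+c-1$. *)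

From HB Require Import structures.
From mathcomp Require Import all_boot all_order all_algebra.
Set Implicit Arguments. Unset Strict Implicit. Unset Printing Implicit Defensive.
Import GRing.Theory.
Local Open Scope ring_scope.

(* Graded Betti numbers beta_{i,j} of R/I(H) for a squarefree monomial ideal
   I(H) = (x^E : E an edge of H) in R = k[x_v : v in V], computed as
   Tor_i^R(R/I,k)_j = H_i(K(x) (x) R/I)_j  (Koszul complex), multidegree by
   multidegree. *)

Section Koszul.
Variables (k : fieldType) (V : finType) (edges : {set {set V}}).

(* x^a lies in the monomial ideal generated by the x^E, E an edge,
   iff some generator x^E divides x^a. *)
Definition mono_in_ideal (a : V -> nat) : bool :=
  [exists E in edges, [forall v in E, (0 < a v)%N]].

Definition kshift (a : V -> nat) (F : {set V}) : V -> nat :=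
  fun v => (a v - (v \in F))%N.

(* basis of the multidegree-a, homological-degree-i part of K(x) (x) R/I:
   the elements m (x) e_F with |F| = i and m the standard monomial x^(a-e_F)
   (which must exist, i.e. a - e_F >= 0, and not lie in I). *)
Definition kbasis (a : V -> nat) (i : nat) (F : {set V}) : bool :=
  [&& #|F| == i, [forall v in F, (0 < a v)%N] & ~~ mono_in_ideal (kshift a F)].

(* Koszul sign of deleting v from F (V ordered by enum_rank) *)
Definition ksign (F : {set V}) (v : V) : k :=
  (-1) ^+ #|[set u in F | (enum_rank u < enum_rank v)%N]|.

Definition NS := #|{: {set V}}|.

(* matrix (row-vector convention) of the Koszul differential
   d_i : K_i(a) -> K_{i-1}(a),  e_F |-> sum_{v in F} sign * x_v e_{F \ v},
   on the space with coordinates indexed by all subsets of V (coordinates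
   outside the basis are identically zero). *)
Definition kdiff (a : V -> nat) (i : nat) : 'M[k]_(NS, NS) :=
  \matrix_(p, q)
    (let F := (enum_val p : {set V}) in let G := (enum_val q : {set V}) in
     if [&& kbasis a i F, kbasis a i.-1 G, G \subset F & #|F| == (#|G|.+1)%N]
     then \sum_(v in F :\: G) ksign F v else 0).

(* dim_k H_i of the multidegree-a strand = dim ker d_i - dim im d_{i+1} *)
Definition koszul_homdim (a : V -> nat) (i : nat) : nat :=
  (#|[set F | kbasis a i F]| - \rank (kdiff a i) - \rank (kdiff a i.+1))%N.

Definition betti (i j : nat) : nat :=
  (\sum_(al : {ffun V -> 'I_j.+1} | (\sum_v (al v : nat))%N == j)
     koszul_homdim (fun v => (al v : nat)) i)%N.

End Koszul.

Definition has_linear_resolution (b : nat -> nat -> nat) : Prop :=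
  exists c : nat, forall i j : nat, (1 <= i)%N -> j <> (i + c - 1)%N -> b i j = 0%N.

(* the d(a)-complete multipartite hypergraph K^{d(a)}_n on B_1 |_| ... |_| B_t,
   |B_s| = n_s: vertex set {s : 'I_t & 'I_(n s)}, block B_s = {x | tag x = s} *)
Definition cmh_vertex (t : nat) (n : 'I_t -> nat) : finType := {s : 'I_t & 'I_(n s)}.

Definition cmh_edges (t : nat) (n a : 'I_t -> nat) : {set {set cmh_vertex n}} :=
  [set E : {set cmh_vertex n} | [forall s : 'I_t, #|[set x in E | tag x == s]| == a s]].

(* The Betti numbers are computed multidegree by multidegree from the Koszul
   complex, and the homology of each multidegree-[m] strand is killed by an acyclic
   matching of its basis (algebraic discrete Morse theory): a matched pair gives a
   pivot entry of the differential, so a strand whose degree-[i] basis elements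
   are all matched has no homology in degree [i].
   If [m w >= 2] for some vertex [w], or if the support of [m] contains no edge,
   toggling [w] (any vertex of the support) is such a matching.  Otherwise [m] is
   the indicator of a set [W] containing an edge, and [F] is a basis element iff
   [F \subset W] and some block [B_s] meets [F] in more than
   [c_s = |W /\ B_s| - a_s] vertices.  Toggling, in turn, one chosen vertex of
   each block leaves unmatched only the [F] with [|F /\ B_s0| = c_s0 + 1] and
   [|F /\ B_s| = c_s] for [s <> s0]; they have [|F| = |W| - d + 1], so they only
   occur in internal degree [j = |W| = i + d - 1]. *)

From mathcomp Require Import all_boot all_order all_algebra.
From mathcomp Require Import zify.
Set Implicit Arguments. Unset Strict Implicit. Unset Printing Implicit Defensive.
Import GRing.Theory.

Section TriangularRank.
Local Open Scope ring_scope.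

Lemma mxrank_ge_triangular (F : fieldType) m n (M : 'M[F]_(m, n)) (P : pred 'I_m)
    (f : 'I_m -> 'I_n) (h : 'I_m -> nat) :
  (forall p, P p -> M p (f p) != 0) ->
  (forall p q, P p -> P q -> p != q -> M p (f q) != 0 -> (h q < h p)%N) ->
  (#|P| <= \rank M)%N.
Proof.
move=> diag_nz tri.
pose e (r : 'I_#|P|) : 'I_m := enum_val r.
have eP r : P (e r) by exact: enum_valP.
have e_inj : injective e by exact: enum_val_inj.
suff free_rows : row_free (rowsub e M).
  by rewrite -(eqP free_rows) rowsubE mxrankM_maxr.
apply: inj_row_free => u uM0; apply/rowP => r0; rewrite mxE.
apply/eqP/negPn/negP => ur0.
(* A relation among the rows is refuted at column [f (e r)], for [r] of maximal height. *)
have [r ur rmax] := @arg_maxnP _ r0 (fun r => u 0 r != 0) (fun r => h (e r)) ur0.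
have := congr1 (fun w : 'rV_n => w 0 (f (e r))) uM0.
rewrite /= !mxE (bigD1 r) //= big1 ?addr0.
  by rewrite mxE; apply/eqP; rewrite mulf_neq0 // diag_nz.
move=> r' r'r; rewrite mxE.
have [->|ur'] := eqVneq (u 0 r') 0; first by rewrite mul0r.
have [->|Mnz] := eqVneq (M (e r') (f (e r))) 0; first by rewrite mulr0.
have := tri _ _ (eP r') (eP r) _ Mnz.
have /= le_r'r := rmax r' ur'.
by rewrite (inj_eq e_inj) r'r => /(_ isT); rewrite ltnNge le_r'r.
Qed.

End TriangularRank.

Definition toggle (V : finType) (F : {set V}) (v : V) : {set V} :=
  if v \in F then F :\ v else v |: F.

Lemma toggleK (V : finType) (F : {set V}) v : toggle (toggle F v) v = F.
Proof.
rewrite /toggle; have [vF|vF] := boolP (v \in F).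
  by rewrite !inE eqxx /= setD1K.
by rewrite setU11 setU1K.
Qed.

Lemma in_toggle (V : finType) (F : {set V}) v x : x != v -> (x \in toggle F v) = (x \in F).
Proof. by move=> xv; rewrite /toggle; case: ifP; rewrite !inE (negbTE xv). Qed.

Lemma subset_card_succ (V : finType) (F G : {set V}) :
  G \subset F -> #|F| = #|G|.+1 -> exists2 u, u \in F & G = F :\ u.
Proof.
move=> GF cF.
have : 0 < #|F :\: G| by rewrite cardsDS // cF subSnn.
case/card_gt0P => u; rewrite inE => /andP [uG uF].
exists u => //; apply/eqP; rewrite eqEcard; apply/andP; split.
  apply/subsetP => x xG; rewrite !inE (subsetP GF) // andbT.
  by apply: contraNneq uG => <-.
by have := cardsD1 u F; rewrite uF cF add1n => -[<-].
Qed.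

Lemma card_enum_val (V : finType) (Q : pred {set V}) :
  #|[pred p : 'I_(NS V) | Q (enum_val p)]| = #|[set F | Q F]|.
Proof.
rewrite -(card_imset _ (@enum_val_inj _ [pred x | true])).
apply: eq_card => F; rewrite [RHS]inE; apply/imsetP/idP.
  by case=> p; rewrite inE => Qp ->.
by move=> QF; exists (enum_rank F); rewrite ?inE enum_rankK.
Qed.

Section KoszulStrand.
Variables (k : fieldType) (V : finType) (edges : {set {set V}}) (m : V -> nat).

Definition cell (F : {set V}) : bool :=
  [forall v in F, 0 < m v] && ~~ mono_in_ideal edges (kshift m F).

Lemma kbasisE i F : kbasis edges m i F = (#|F| == i) && cell F.
Proof. by []. Qed.

Lemma cell_toggle_of_gt1 w F : 1 < m w -> cell (toggle F w) = cell F.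
Proof.
move=> mw; rewrite /cell; congr (_ && ~~ _).
  apply/forall_inP/forall_inP => Fm x xF; have [->|xw] := eqVneq x w.
  - exact: ltnW.
  - by apply: Fm; rewrite in_toggle.
  - exact: ltnW.
  - by apply: Fm; move: xF; rewrite in_toggle.
apply: eq_existsb => E; congr (_ && _); apply: eq_forallb => x; congr (_ ==> _).
rewrite /kshift; have [->|xw] := eqVneq x w; last by rewrite in_toggle.
have pos (b : bool) : 0 < m w - b by case: b; rewrite /= ?subn0 ?subn_gt0 // ltnW.
by rewrite !pos.
Qed.

(* An acyclic matching on the cells of the strand: [pivot F = Some v] pairs [F]
   with [toggle F v]; [height] orders the matched pairs. *)
Variables (pivot : {set V} -> option V) (height : {set V} -> nat).

Definition matched_down F := if pivot F is Some v then v \in F else false.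
Definition mate F := if pivot F is Some v then toggle F v else F.

Hypothesis pivot_mate : forall F v, cell F -> pivot F = Some v ->
  cell (toggle F v) /\ pivot (toggle F v) = Some v.
Hypothesis matching_acyclic : forall p q u, cell p -> cell q ->
  matched_down p -> matched_down q -> u \in p -> mate q = p :\ u -> p != q ->
  height q < height p.

Lemma mateK F : cell F -> mate (mate F) = F.
Proof.
move=> cF; rewrite /mate; case E: (pivot F) => [v|]; last by rewrite E.
by have [_ ->] := pivot_mate cF E; rewrite toggleK.
Qed.

(* Each down-matched cell gives a pivot entry of the differential, below which
   the matrix is triangular for [height]. *)
Lemma card_matched_down_le_rank i : 0 < i ->
  #|[set F | kbasis edges m i F && matched_down F]| <= \rank (kdiff k edges m i).
Proof.
move=> i_gt0; rewrite -card_enum_val.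
apply: (@mxrank_ge_triangular _ _ _ _ _ (fun p => enum_rank (mate (enum_val p)))
   (fun p => height (enum_val p))).
- move=> p /andP [] /=; set F := enum_val p; rewrite kbasisE /matched_down /mate.
  move=> /andP [/eqP cardF cF]; case E: (pivot F) => [v|] // vF.
  have [+ _] := pivot_mate cF E; rewrite /toggle vF => cFv.
  have cardFv : #|F :\ v| = i.-1 by rewrite -cardF (cardsD1 v F) vF.
  rewrite mxE enum_rankK /= -/F !kbasisE cardF cFv cF cardFv subD1set.
  rewrite prednK // !eqxx (eq_bigl (pred1 v)); last first.
    by move=> x; rewrite !inE /=; case: (x =P v) => [->|]; rewrite ?vF //=; case: (x \in F).
  by rewrite big_pred1_eq /ksign signr_eq0.
- move=> p q /andP [+ dp] /andP [+ dq] pq /=; rewrite !kbasisE.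
  move=> /andP [_ cp] /andP [_ cq].
  rewrite mxE enum_rankK /=.
  case: ifP => [/and4P [_ _ sub card_succ] _|]; last by rewrite eqxx.
  have [u up' equ] := subset_card_succ sub (eqP card_succ).
  apply: (matching_acyclic cp cq dp dq up' equ).
  by rewrite (inj_eq enum_val_inj).
Qed.

Lemma card_cells_matched_up i :
  (forall F, cell F -> #|F| = i -> pivot F != None) ->
  #|[set F | kbasis edges m i F & ~~ matched_down F]| =
  #|[set F | kbasis edges m i.+1 F && matched_down F]|.
Proof.
move=> all_matched; rewrite -(card_in_imset (f := mate)); last first.
  move=> F1 F2; rewrite !inE !kbasisE => /andP [/andP [_ c1] _] /andP [/andP [_ c2] _] e.
  by rewrite -(mateK c1) e mateK.
apply: eq_card => G; rewrite [in RHS]inE; apply/imsetP/idP.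
  case=> F; rewrite !inE kbasisE => /andP [/andP [/eqP cardF cF] up] ->.
  have := all_matched F cF cardF; rewrite /matched_down in up; rewrite /mate.
  case E: (pivot F) => [v|] // _; rewrite E in up.
  have [] := pivot_mate cF E; rewrite /toggle (negbTE up) => cFv EFv.
  by rewrite kbasisE cFv /matched_down EFv setU11 cardsU1 up cardF !andbT.
rewrite kbasisE /matched_down => /andP [/andP [/eqP cardG cG]].
case E: (pivot G) => [v|] // vG.
have [] := pivot_mate cG E; rewrite /toggle vG => cGv EGv.
exists (G :\ v); last by rewrite /mate EGv /toggle setD11 setD1K.
rewrite !inE kbasisE cGv /matched_down EGv setD11 /= !andbT.
by rewrite -eqSS -cardG (cardsD1 v G) vG.
Qed.

Lemma koszul_homdim_matching i : 0 < i ->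
  (forall F, cell F -> #|F| = i -> pivot F != None) ->
  koszul_homdim k edges m i = 0.
Proof.
move=> i_gt0 all_matched; apply/eqP; rewrite /koszul_homdim !subn_eq0 leq_subLR.
rewrite -(cardsID [set F | matched_down F]).
rewrite (eq_card (B := [set F | kbasis edges m i F && matched_down F])); last first.
  by move=> F; rewrite !inE.
rewrite [X in _ + X]
  (eq_card (B := [set F | kbasis edges m i F & ~~ matched_down F])); last first.
  by move=> F; rewrite !inE andbC.
by rewrite card_cells_matched_up // leq_add // card_matched_down_le_rank.
Qed.

End KoszulStrand.

Section Cone.
Variables (k : fieldType) (V : finType) (edges : {set {set V}}) (m : V -> nat).

Lemma koszul_homdim_cone w i : 0 < i ->
  (forall F, cell edges m (toggle F w) = cell edges m F) ->
  koszul_homdim k edges m i = 0.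
Proof.
move=> i_gt0 cell_toggle.
apply: (@koszul_homdim_matching k V edges m (fun _ => Some w) (fun _ => 0)) => //.
- by move=> F v cF [<-]; rewrite cell_toggle.
- move=> p q u _ _; rewrite /matched_down /mate => wp wq up e pq; exfalso.
  have wu : w = u.
    apply/eqP; apply: contraT => wu.
    have : w \in p :\ u by rewrite !inE wu wp.
    by rewrite -e /toggle wq !inE eqxx.
  move: e; rewrite -wu /toggle wq => e.
  by move/negP: pq; apply; rewrite -(setD1K wp) -(setD1K wq) e.
Qed.

Lemma koszul_homdim_no_cell i : 0 < i ->
  (forall F, cell edges m F -> #|F| != i) -> koszul_homdim k edges m i = 0.
Proof.
move=> i_gt0 no_cell.
apply: (@koszul_homdim_matching k V edges m (fun _ => None) (fun _ => 0)) => //.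
by move=> F cF cardF; have := no_cell F cF; rewrite cardF eqxx.
Qed.

End Cone.

Section Multipartite.
Variables (t : nat) (n a : 'I_t -> nat).
Local Notation V := (cmh_vertex n).

Definition block (X : {set V}) (s : 'I_t) := [set x in X | tag x == s].

Lemma card_blocks (X : {set V}) : #|X| = \sum_(s < t) #|block X s|.
Proof.
rewrite -sum1_card (partition_big (fun x : V => tag x) xpredT) //.
by apply: eq_bigr => s _; rewrite -sum1_card; apply: eq_bigl => x; rewrite !inE.
Qed.

Lemma block_sub (X Y : {set V}) s : X \subset Y -> block X s \subset block Y s.
Proof.
by move=> XY; apply/subsetP => x; rewrite !inE => /andP [/(subsetP XY) -> ->].
Qed.

Lemma cmh_edge_subsetE (U : {set V}) :
  [exists E in cmh_edges n a, E \subset U] = [forall s, a s <= #|block U s|].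
Proof.
apply/existsP/forallP.
  case=> E /andP [+ EU] s; rewrite inE => /forallP /(_ s) /eqP <-.
  exact: subset_leq_card (block_sub s EU).
move=> big_blocks.
pose E := [set x : V | x \in take (a (tag x)) (enum (block U (tag x)))].
have blockE s : block E s = [set x in take (a s) (enum (block U s))].
  apply/setP => x; rewrite !inE; apply/andP/idP => [[+ /eqP <-] //|xin].
  have := mem_take xin; rewrite mem_enum !inE => /andP [_ /eqP tx].
  by rewrite tx.
exists E; rewrite inE; apply/andP; split.
  apply/forallP => s; rewrite -/(block E s) blockE cardsE.
  by rewrite (card_uniqP _) ?take_uniq ?enum_uniq // size_takel // -cardE.
by apply/subsetP => x; rewrite inE => /mem_take; rewrite mem_enum !inE => /andP [].
Qed.

Section Squarefree.
Variable m : V -> nat.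
Hypothesis m_le1 : forall v, m v <= 1.

Definition supp := [set v | 0 < m v].

Lemma cell_squarefree F : cell (cmh_edges n a) m F =
  (F \subset supp) && ~~ [forall s, a s <= #|block (supp :\: F) s|].
Proof.
rewrite /cell; congr (_ && ~~ _).
  by apply/forall_inP/subsetP => Fm x /Fm; rewrite inE.
rewrite /mono_in_ideal -cmh_edge_subsetE; apply: eq_existsb => E; congr (_ && _).
have kshift_pos x : (0 < kshift m F x) = (x \in supp :\: F).
  by rewrite /kshift !inE; have := m_le1 x; case: (x \in F); case: (m x) => [|[|]].
by apply/forall_inP/subsetP => EF x /EF; rewrite kshift_pos.
Qed.

Lemma koszul_homdim_no_edge_in_supp (k : fieldType) i : 0 < i ->
  (exists s, #|block supp s| < a s) -> koszul_homdim k (cmh_edges n a) m i = 0.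
Proof.
move=> i_gt0 [s0 small_s0].
have cellE F : cell (cmh_edges n a) m F = (F \subset supp).
  rewrite cell_squarefree; case: (F \subset supp) => //=; apply/negP => /forallP /(_ s0).
  apply/negP; rewrite -ltnNge; apply: leq_ltn_trans small_s0.
  by apply/subset_leq_card/block_sub/subsetDl.
have [supp0|[w wsupp]] := set_0Vmem supp.
  apply: koszul_homdim_no_cell => // F; rewrite cellE supp0 subset0 => /eqP ->.
  by rewrite cards0 eq_sym -lt0n.
apply: (@koszul_homdim_cone _ _ _ _ w) => // F; rewrite !cellE /toggle.
case: ifP => [wF|_]; last by rewrite subUset sub1set wsupp.
by rewrite -{2}(setD1K wF) subUset sub1set wsupp.
Qed.

Section AllBlocksFull.
Hypothesis big_blocks : forall s, a s <= #|block supp s|.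
Variable s0 : 'I_t.
Hypothesis s0_eq0 : val s0 = 0.
Variable vv : 'I_t -> V.
Hypothesis vv_block : forall s, vv s \in block supp s.
Local Notation v0 := (vv s0).

Definition slack s := #|block supp s| - a s.
Definition overfull (F : {set V}) := (F \subset supp) && [exists s, slack s < #|block F s|].

Lemma cell_overfull F : cell (cmh_edges n a) m F = overfull F.
Proof.
rewrite cell_squarefree /overfull; case Fsupp: (F \subset supp) => //=.
rewrite negb_forall; apply: eq_existsb => s.
have -> : block (supp :\: F) s = block supp s :\: block F s.
  by apply/setP => x; rewrite !inE; case: (x \in F); case: (tag x == s); rewrite ?andbF.
rewrite cardsDS ?block_sub // -ltnNge /slack.
have := big_blocks s; have := subset_leq_card (block_sub s Fsupp).
move: (#|block supp s|) (#|block F s|) (a s) => x y z h1 h2.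
by apply/idP/idP; lia.
Qed.

Lemma tag_vv s : tag (vv s) = s.
Proof. by have := vv_block s; rewrite !inE => /andP [_ /eqP]. Qed.

Lemma vv_supp s : vv s \in supp.
Proof. by have := vv_block s; rewrite inE => /andP []. Qed.

Lemma vv_neq s j : s != j -> vv s != vv j.
Proof. by apply: contraNneq => /(congr1 tag); rewrite !tag_vv => ->. Qed.

Lemma block_toggle_neq (F : {set V}) j s : s != j -> block (toggle F (vv j)) s = block F s.
Proof.
move=> sj; apply/setP => x; rewrite !inE; have [->|xv] := eqVneq x (vv j).
  by rewrite tag_vv eq_sym (negbTE sj) !andbF.
by rewrite in_toggle.
Qed.

Lemma card_block_toggle (F : {set V}) j :
  #|block (toggle F (vv j)) j| = if vv j \in F then #|block F j|.-1 else #|block F j|.+1.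
Proof.
have vvj : vv j \in [set x | tag x == j] by rewrite inE tag_vv.
rewrite /toggle; case: ifP => vF.
  have -> : block (F :\ vv j) j = block F j :\ vv j by apply/setP => x; rewrite !inE andbA.
  by rewrite (cardsD1 (vv j) (block F j)) !inE vF tag_vv eqxx.
have -> : block (vv j |: F) j = vv j |: block F j.
  by apply/setP => x; rewrite !inE; have [->|] := eqVneq x (vv j); rewrite ?tag_vv ?eqxx.
by rewrite cardsU1 !inE vF.
Qed.

Definition unmatched0 (F : {set V}) := overfull F && ~~ overfull (toggle F v0).

Lemma unmatched0P (F : {set V}) : reflect
  [/\ v0 \in F, F \subset supp, #|block F s0| = (slack s0).+1 &
      forall s, s != s0 -> #|block F s| <= slack s]
  (unmatched0 F).
Proof.
apply: (iffP andP) => [[/andP [Fsupp /existsP [s1 over_s1]] not_over]|].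
  have v0F : v0 \in F.
    apply: contraNT not_over => v0F; rewrite /overfull /toggle (negbTE v0F).
    rewrite subUset sub1set vv_supp Fsupp; apply/existsP; exists s1.
    by apply: leq_trans over_s1 (subset_leq_card (block_sub _ (subsetUr _ _))).
  move: not_over; rewrite /overfull negb_and negb_exists /toggle v0F.
  rewrite (subset_trans (subD1set _ _) Fsupp) /= => /forallP not_over.
  have small s : s != s0 -> #|block F s| <= slack s.
    move=> ss0; have := not_over s; rewrite -(block_toggle_neq F ss0) /toggle v0F.
    by rewrite -leqNgt.
  have s1s0 : s1 = s0.
    by apply/eqP; apply: contraLR over_s1 => /small; rewrite -leqNgt.
  subst s1; split => //; have := not_over s0.
  have := card_block_toggle F s0; rewrite /toggle v0F => ->.
  by rewrite -leqNgt; move: over_s1; case: #|block F s0| => //= x; lia.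
case=> v0F Fsupp full_s0 small; split.
  by rewrite /overfull Fsupp; apply/existsP; exists s0; rewrite full_s0.
rewrite /overfull negb_and negb_exists; apply/orP; right; apply/forallP => s.
rewrite -leqNgt; have [->|ss0] := eqVneq s s0.
  by rewrite card_block_toggle v0F full_s0.
by rewrite block_toggle_neq // small.
Qed.

(* Toggling [vv j] keeps [F] unmatched by [v0] exactly when [togglable j F]. *)
Definition togglable j (F : {set V}) := (vv j \in F) || (#|block F j| < slack j).
Definition first_togglable (F : {set V}) j := [&& 0 < val j, togglable j F &
  [forall s : 'I_t, (0 < val s < val j) ==> ~~ togglable s F]].

Lemma first_togglable_uniq (F : {set V}) j j' :
  first_togglable F j -> first_togglable F j' -> j = j'.
Proof.
case/and3P => j_gt0 Tj /forallP before_j; case/and3P => j'_gt0 Tj' /forallP before_j'.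
apply: val_inj; case: (ltngtP (val j) (val j')) => // lt_jj'.
  by have := before_j' j; rewrite j_gt0 lt_jj' Tj.
by have := before_j j'; rewrite j'_gt0 lt_jj' Tj'.
Qed.

Lemma exists_first_togglable (F : {set V}) j :
  0 < val j -> togglable j F -> exists j', first_togglable F j'.
Proof.
move=> j_gt0 Tj.
have [j' /andP [j'_gt0 Tj'] j'_min] :=
  @arg_minnP _ j (fun j => (0 < val j) && togglable j F) (fun j => val j)
    (introT andP (conj j_gt0 Tj)).
exists j'; rewrite /first_togglable j'_gt0 Tj' /=.
apply/forallP => s; apply/implyP => /andP [s_gt0 lt_sj']; apply/negP => Ts.
by have := j'_min s; rewrite s_gt0 Ts => /(_ isT); rewrite leqNgt lt_sj'.
Qed.

Lemma pick_first_togglable (F : {set V}) j :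
  first_togglable F j -> [pick j' | first_togglable F j'] = Some j.
Proof.
move=> Fj; case: pickP => [j' Fj'|none]; first by rewrite (first_togglable_uniq Fj' Fj).
by have := none j; rewrite Fj.
Qed.

Lemma first_togglable_toggle (F : {set V}) j : unmatched0 F -> first_togglable F j ->
  unmatched0 (toggle F (vv j)) /\ first_togglable (toggle F (vv j)) j.
Proof.
move=> /unmatched0P [v0F Fsupp full_s0 small] Fj.
case/and3P: (Fj) => j_gt0 Tj /forallP before_j.
have js0 : j != s0 by apply: contraTneq j_gt0 => ->; rewrite s0_eq0.
have Tj' : togglable j (toggle F (vv j)) && (#|block (toggle F (vv j)) j| <= slack j).
  move: (small j js0) Tj; rewrite /togglable card_block_toggle /toggle.
  case: ifP => [vF le_j _|_ _ /= lt_j]; last by rewrite setU11.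
  have : 0 < #|block F j| by apply/card_gt0P; exists (vv j); rewrite !inE vF tag_vv /=.
  by rewrite !inE eqxx /=; case: #|block F j| le_j => //= x; lia.
case/andP: Tj' => Tj' small_j; split.
  apply/unmatched0P; split.
  - by rewrite in_toggle // vv_neq // eq_sym.
  - rewrite /toggle; case: ifP => _; last by rewrite subUset sub1set vv_supp.
    exact: subset_trans (subD1set _ _) Fsupp.
  - by rewrite block_toggle_neq // eq_sym.
  - move=> s ss0; have [->|sj] := eqVneq s j; first exact: small_j.
    by rewrite block_toggle_neq // small.
rewrite /first_togglable j_gt0 Tj'; apply/forallP => s; apply/implyP => s_range.
have sj : s != j by apply: contraTneq s_range => ->; rewrite ltnn andbF.
have := before_j s; rewrite s_range /togglable block_toggle_neq // in_toggle //.
exact: vv_neq.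
Qed.

(* First toggle [v0]; on the cells this leaves unmatched, toggle [vv j] for the
   first togglable block [j > 0].  The first stage sits above all later ones. *)
Definition block_pivot (F : {set V}) :=
  if overfull (toggle F v0) then Some v0
  else if [pick j | first_togglable F j] is Some j then Some (vv j) else None.
Definition block_height (F : {set V}) :=
  if overfull (toggle F v0) then t
  else if [pick j | first_togglable F j] is Some j then val j else 0.

Lemma block_pivot_spec (F : {set V}) x : block_pivot F = Some x ->
  [/\ overfull (toggle F v0), x = v0 & block_height F = t] \/
  ~~ overfull (toggle F v0) /\
    exists j, [/\ first_togglable F j, x = vv j & block_height F = val j].
Proof.
rewrite /block_pivot /block_height; case: ifP => [_ [<-]|not_over]; first by left.
by case: pickP => // j Fj [<-]; right; split => //; exists j.
Qed.

Lemma block_pivot_mate (F : {set V}) x : overfull F -> block_pivot F = Some x ->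
  overfull (toggle F x) /\ block_pivot (toggle F x) = Some x.
Proof.
move=> overF /block_pivot_spec [[over0 -> _]|[not_over [j [Fj -> _]]]].
  by rewrite /block_pivot toggleK overF.
have unm0 : unmatched0 F by apply/andP.
have [/andP [overF' not_over'] Fj'] := first_togglable_toggle unm0 Fj.
by rewrite /block_pivot (negbTE not_over') (pick_first_togglable Fj').
Qed.

Lemma block_pivot_acyclic p q u : overfull p -> overfull q ->
  matched_down block_pivot p -> matched_down block_pivot q -> u \in p ->
  mate block_pivot q = p :\ u -> p != q -> block_height q < block_height p.
Proof.
rewrite /matched_down /mate => overp overq.
case Ep: (block_pivot p) => [vp|] // vpp; case Eq: (block_pivot q) => [vq|] // vqq.
rewrite /toggle vqq => up e pq.
have in_q x : x \in p -> x != u -> x \in q.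
  move=> xp xu; have : x \in p :\ u by rewrite !inE xu xp.
  by rewrite -e => /setD1P [].
have vq_notin_p : vq \notin p.
  apply/negP => vqp; have vqu : vq = u.
    apply/eqP; apply: contraT => vqu.
    have : vq \in p :\ u by rewrite !inE vqu vqp.
    by rewrite -e !inE eqxx.
  by move/negP: pq; apply; apply/eqP; rewrite -(setD1K vqq) e -vqu setD1K.
have unmatched_p : ~~ overfull (toggle p v0) -> unmatched0 p by move=> ?; apply/andP.
have unmatched_q : ~~ overfull (toggle q v0) -> unmatched0 q by move=> ?; apply/andP.
have v0p : v0 \in p.
  case: (block_pivot_spec Ep) => [[_ <- _] // | [/unmatched_p unm _]].
  by case/unmatched0P: unm.
case: (block_pivot_spec Eq) => [[_ vq0 _]|[/unmatched_q unmq [s [qs vqs ->]]]].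
  by move: vq_notin_p; rewrite vq0 v0p.
case: (block_pivot_spec Ep) => [[_ _ ->]|[/unmatched_p unmp [r [pr vpr ->]]]].
  exact: ltn_ord.
rewrite ltnNge; apply/negP => le_rs.
case: (ltngtP (val r) (val s)) le_rs => [lt_rs|//|/val_inj eq_rs] _; last first.
  by move: vq_notin_p; rewrite vqs -eq_rs -vpr vpp.
have : ~~ togglable r q.
  case/and3P: qs => _ _ /forallP /(_ r); case/and3P: pr => r_gt0 _ _.
  by rewrite r_gt0 lt_rs.
rewrite /togglable negb_or => /andP [vr_notin_q _].
have vru : vv r = u.
  by apply/eqP; apply: contraNT vr_notin_q => vru; apply: in_q; rewrite // -vpr.
have [_ fp] := first_togglable_toggle unmp pr.
have [_ fq] := first_togglable_toggle unmq qs.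
move: fp fq; rewrite /toggle -vpr vpp -vqs vqq vpr vru -e => fp fq.
by move: lt_rs; rewrite (first_togglable_uniq fp fq) ltnn.
Qed.

Lemma sum_slack : \sum_s slack s + \sum_s a s = #|supp|.
Proof.
rewrite -big_split (card_blocks supp); apply: eq_bigr => s _.
by rewrite /= subnK.
Qed.

Lemma card_unmatched (F : {set V}) : overfull F -> block_pivot F = None ->
  #|F| = (\sum_s slack s).+1.
Proof.
rewrite /block_pivot => overF; case: ifP => // not_over; case: pickP => // none _.
have /unmatched0P [v0F Fsupp full_s0 small] : unmatched0 F.
  by rewrite /unmatched0 overF not_over.
have full s : s != s0 -> #|block F s| = slack s.
  move=> ss0; apply/eqP; rewrite eqn_leq small //=.
  have s_gt0 : 0 < val s by rewrite lt0n -s0_eq0 (inj_eq val_inj).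
  rewrite leqNgt; apply/negP => lt_s.
  have [j Fj] := exists_first_togglable s_gt0 (introT orP (or_intror lt_s)).
  by have := none j; rewrite Fj.
rewrite card_blocks (bigD1 s0) //= full_s0 [in RHS](bigD1 s0) //= addSn.
by congr (_ + _).+1; apply: eq_bigr => s ss0; rewrite full.
Qed.

Lemma koszul_homdim_edges_in_supp (k : fieldType) i : 0 < i ->
  #|supp| != i + \sum_s a s - 1 -> koszul_homdim k (cmh_edges n a) m i = 0.
Proof.
move=> i_gt0 not_linear.
apply: (@koszul_homdim_matching k V (cmh_edges n a) m block_pivot block_height) => //.
- by move=> F x; rewrite !cell_overfull; apply: block_pivot_mate.
- by move=> p q u; rewrite !cell_overfull; apply: block_pivot_acyclic.
- move=> F; rewrite cell_overfull => overF cardF; apply/negP => /eqP none.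
  move: not_linear; rewrite -sum_slack -cardF card_unmatched //.
  by move: (\sum_s slack s) => x /eqP; lia.
Qed.

End AllBlocksFull.
End Squarefree.

Lemma koszul_homdim_cmh (k : fieldType) (m : V -> nat) i :
  0 < t -> (forall s, 0 < a s) -> 0 < i -> \sum_v m v != i + \sum_(s < t) a s - 1 ->
  koszul_homdim k (cmh_edges n a) m i = 0.
Proof.
move=> t_gt0 a_gt0 i_gt0 not_linear.
have [[w mw]|m_le1] := altP (@existsP _ (fun w => 1 < m w)).
  by apply: (@koszul_homdim_cone _ _ _ _ w) => // F; apply: cell_toggle_of_gt1.
have {}m_le1 v : m v <= 1.
  by rewrite leqNgt; apply: contra m_le1 => ?; apply/existsP; exists v.
have [small|/existsPn big] := boolP [exists s, #|block (supp m) s| < a s].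
  by apply: koszul_homdim_no_edge_in_supp => //; apply/existsP.
have {}big s : a s <= #|block (supp m) s| by rewrite leqNgt big.
have [vv vv_block] : exists vv : 'I_t -> V, forall s, vv s \in block (supp m) s.
  apply: (fin_all_exists (P := fun s x => x \in block (supp m) s)) => s.
  by apply/card_gt0P; apply: leq_trans (a_gt0 s) (big s).
apply: (@koszul_homdim_edges_in_supp m m_le1 big (Ordinal t_gt0) _ vv vv_block) => //.
suff <- : \sum_v m v = #|supp m| by [].
rewrite -sum1_card [RHS]big_mkcond /=; apply: eq_bigr => v _.
by rewrite inE; have := m_le1 v; case: (m v) => [|[|]].
Qed.

End Multipartite.

Theorem lemma3p15 (k : fieldType) (t : nat) (n a : 'I_t -> nat) :
  (1 <= t)%N ->
  (forall s, 1 <= n s)%N ->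
  (forall s, 1 <= a s)%N ->
  (2 <= \sum_(s < t) a s)%N ->
  has_linear_resolution (betti k (cmh_edges n a)) /\
  (forall i j : nat, (1 <= i)%N -> betti k (cmh_edges n a) i j <> 0%N ->
     j = (i + ((\sum_(s < t) a s) - 1))%N).
Proof.
move=> t_gt0 _ a_gt0 d_ge2.
have betti_eq0 i j : 0 < i -> j <> i + \sum_(s < t) a s - 1 ->
    betti k (cmh_edges n a) i j = 0.
  move=> i_gt0 j_nonlinear; rewrite /betti big1 // => al /eqP deg_al.
  by apply: koszul_homdim_cmh => //; rewrite deg_al; apply/eqP.
split; first by exists (\sum_(s < t) a s) => i j; apply: betti_eq0.
move=> i j i_gt0 betti_nz; apply/eqP; apply: contraT => /eqP j_nonlinear.
by case: betti_nz; apply: betti_eq0 => // j_linear; apply: j_nonlinear; lia.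
Qed.
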